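(* Let $x_0>0$ and let $(U_n)_{n\ge1}$ be random utility functions satisfying: $\sup_n\|U_n^+(\cdot,x_0)\|_1<\infty$, $\sup_n\|U_n^-(\cdot,x_0)\|_1<\infty$ and $\sup_n\|U_n'(\cdot,x_0)\|_q<\infty$ for some $q>1$. Suppose that for all $\varepsilon\in(0,x_0)$ and all $C\ge0$, $$\lim_{n\to\infty}\inf_{P\in\mathcal Q^T}P\Big(\int_{x_0-\varepsilon/2}^{x_0}U_n''(\cdot,v)\,dv<-\frac C\varepsilon\Big)=1.$$ Then for all $0\le x<x_0$ and $M\ge0$, $\lim_{n\to\infty}\inf_{P\in\mathcal Q^T}P(U_n(\cdot,x)\le -M)=1$.
   Context: Framework: $T\ge1$; Polish spaces $\Omega_1,\dots,\Omega_T$; $\Omega^t:=\Omega_1\times\cdots\times\Omega_t$. $\mathfrak P(X)$: Borel probability measures on Polish $X$; $\mathcal B_c(X)$: universal $\sigma$-algebra, each $P$ extended to it. $\mathcal SK_t$: universally measurable stochastic kernels on $\Omega_t$ given $\Omega^{t-1}$; $P\otimes p(A):=\int\int1_A(\omega^{t-1},\omega_t)p(d\omega_t,\omega^{t-1})P(d\omega^{t-1})$. Given random sets $\mathcal Q_{t+1}:\Omega^t\twoheadrightarrow\mathfrak P(\Omega_{t+1})$, $\mathcal Q^T:=\{Q_1\otimes q_2\otimes\cdots\otimes q_T:Q_1\in\mathcal Q_1,\ q_{s+1}\in\mathcal SK_{s+1},\ q_{s+1}(\cdot,\omega^s)\in\mathcal Q_{s+1}(\omega^s)\ Q_s\text{-a.s.}\}$.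 For universally measurable $X$ on $\Omega^T$ and $r\in(0,\infty)$, $\|X\|_r:=(\sup_{P\in\mathcal Q^T}E_P|X|^r)^{1/r}$. A random utility function is $U:\Omega^T\times(0,\infty)\to\mathbb R$ with $U(\cdot,x)$ universally measurable for each $x>0$ and $U(\omega^T,\cdot)$ concave, strictly increasing and twice continuously differentiable on $(0,\infty)$ for each $\omega^T$, extended to $0$ by right-continuity and by $-\infty$ on $(-\infty,0)$; $U',U''$ are derivatives in $x$. *)

From HB Require Import structures.
From mathcomp Require Import all_boot all_order all_algebra.
From mathcomp Require Import all_classical all_reals all_analysis measurable_realfun.
Set Implicit Arguments. Unset Strict Implicit. Unset Printing Implicit Defensive.
Import Order.TTheory GRing.Theory Num.Theory.
Import numFieldNormedType.Exports.
Local Open Scope classical_set_scope.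
Local Open Scope ring_scope.

Definition separable_space (X : topologicalType) : Prop :=
  exists D : set X, countable D /\ closure D = setT.

Definition Borel (X : ptopologicalType) : measurableType _ := g_sigma_algebraType (@open X).


Definition MSpace := {d : measure_display & measurableType d}.

Section omt.
Variable R : realType.
Variable Om : nat -> completePseudoMetricType R.
Fixpoint Omt (t : nat) : MSpace :=
  match t with
  | 0 => existT _ _ (Borel (Om 0))
  | t'.+1 => existT _ _ ((projT2 (Omt t') * Borel (Om t'.+1))%type : measurableType _)
  end.
End omt.

Section defs.
Context {R : realType}.
Local Open Scope ereal_scope.

Definition Pc d (X : measurableType d) (P : probability X R)
  : {measure set (caratheodory_type (P^*)%mu) -> \bar R} :=
  @completed_measure_extension _ _ R P.

Definition univ_meas d (X : measurableType d) (A : set X) : Prop :=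
  forall P : probability X R, measurable (A : set (caratheodory_type (P^*)%mu)).

Definition univ_meas_fun d (X : measurableType d) (f : X -> \bar R) : Prop :=
  forall B : set (\bar R), measurable B -> univ_meas (f @^-1` B).

Definition univ_meas_funR d (X : measurableType d) (f : X -> R) : Prop :=
  forall B : set R, measurable B -> univ_meas (f @^-1` B).

Definition sto_kernel d d' (X : measurableType d) (Y : measurableType d')
  (q : X -> probability Y R) : Prop :=
  forall A : set Y, measurable A -> univ_meas_fun (fun x => q x A).

Definition compose d d' (X : measurableType d) (Y : measurableType d')
  (P : probability X R) (q : X -> probability Y R) : set (X * Y) -> \bar R :=
  fun A => \int[Pc P]_x q x (xsection A x).

Definition Exp d (X : measurableType d) (P : probability X R) (f : X -> \bar R)
  : \bar R := \int[Pc P]_x f x.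

Definition rnorm d (X : measurableType d) (Q : set (probability X R)) (r : R)
  (f : X -> R) : \bar R :=
  poweR (ereal_sup [set Exp P (fun x => (`|f x| `^ r)%:E) | P in Q]) r^-1.

End defs.

Section QT.
Context {R : realType}.
Local Open Scope ereal_scope.
Variable Om : nat -> completePseudoMetricType R.
(* NB: indexing shifted by one: Om t is Omega_{t+1}, Omt Om t is Omega^{t+1} *)
Notation OT t := (projT2 (Omt Om t)).
Variable Q1 : set (probability (Borel (Om 0)) R).
Variable Qs : forall t : nat, OT t -> set (probability (Borel (Om t.+1)) R).

(* inQ t P <-> P = Q_1 (x) q_2 (x) ... (x) q_{t+1} with admissible kernels *)
Fixpoint inQ (t : nat) : probability (OT t) R -> Prop :=
  match t with
  | 0 => fun P => Q1 P
  | t'.+1 => fun P =>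
      exists (P' : probability (OT t') R)
             (q : OT t' -> probability (Borel (Om t'.+1)) R),
        [/\ inQ P', sto_kernel q,
            {ae Pc P', forall w, Qs w (q w)} &
            forall A : set (OT t'.+1), measurable A -> P A = compose P' q A]
  end.

(* the set Q^T of priors on Omega^T (T >= 1, Omega^T = OT T.-1) *)
Definition QT (T : nat) : set (probability (OT T.-1) R) := [set P | inQ P].

End QT.
Arguments QT {R Om} Q1 Qs T _.

Section utility.
Context {R : realType}.
Local Open Scope ring_scope.

Definition random_utility d (X : measurableType d) (U : X -> R -> R) : Prop :=
  (forall x : R, 0 < x -> univ_meas_funR (R := R) (fun w => U w x)) /\
  forall w : X,
    [/\
        (forall x y t : R, 0 < x -> 0 < y -> 0 <= t <= 1 ->
           t * U w x + (1 - t) * U w y <= U w (t * x + (1 - t) * y)),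
        (forall x y : R, 0 < x -> x < y -> U w x < U w y) &
        (forall x : R, 0 < x ->
           [/\ derivable (U w) x 1, derivable (derive1 (U w)) x 1 &
               {for x, continuous (derive1n 2 (U w))}])].

Definition Uext d (X : measurableType d) (U : X -> R -> R) (w : X) (x : R)
  : \bar R :=
  if 0 < x then (U w x)%:E
  else if x == 0 then lim ((fun y => (U w y)%:E) @ 0^'+)
  else -oo%E.

End utility.

(** Put [eps = (x0 - x) / 2], [x' = x0 - eps] and [b = x0 - eps / 2]. For a concave,
    increasing [C^2] utility, [U'(b) = U'(x0) - \int_b^x0 U'' >= - \int_b^x0 U''], and the
    tangent at [b] gives [U(x) <= U(x') <= U(x0) - (b - x') U'(b)].  Hence on the event
    [\int_b^x0 U'' < -C/eps] we get [U(x) <= U(x0) - C/2].  Markov's inequality with the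
    uniform bound on [||U^+(x0)||_1] makes [U(x0) < K/e] outside an event of probability at
    most [e] under every prior in [Q^T]; taking [C = 2 (K/e + M)], the probability of
    [U(x) <= -M] is at least that of the curvature event minus [e], which tends to [1 - e]. *)

From HB Require Import structures.
From mathcomp Require Import all_boot all_order all_algebra.
From mathcomp Require Import all_classical all_reals all_analysis measurable_realfun.
From mathcomp Require Import ring lra.
Set Implicit Arguments.
Unset Strict Implicit.
Unset Printing Implicit Defensive.
Import Order.TTheory GRing.Theory Num.Theory.
Import numFieldNormedType.Exports.
Local Open Scope classical_set_scope.
Local Open Scope ring_scope.

Section real_functions.
Context {R : realType}.

Lemma derive1_cvg_at_left (f : R -> R) (a : R) : derivable f a 1 ->
  h^-1 * (f (h + a) - f a) @[h --> 0^'-] --> derive1 f a.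
Proof.
move=> df; rewrite derive1E.
have dq : h^-1 *: ((f \o shift a) (h *: 1) - f a) @[h --> 0^'] --> 'D_1 f a
  := df.
have -> : (fun h => h^-1 * (f (h + a) - f a)) =
    (fun h => h^-1 *: ((f \o shift a) (h *: 1) - f a)).
  by apply/funext => h /=; rewrite [h *: 1]mulr1.
apply: cvg_trans dq; apply: cvg_app.
by apply: within_subset => h /= /lt_eqF ->.
Qed.

Section concave_increasing_C2.
Variable f : R -> R.
Hypothesis f_concave : forall x y t : R, 0 < x -> 0 < y -> 0 <= t <= 1 ->
  t * f x + (1 - t) * f y <= f (t * x + (1 - t) * y).
Hypothesis f_incr : forall x y : R, 0 < x -> x < y -> f x < f y.
Hypothesis f_C2 : forall x : R, 0 < x ->
  [/\ derivable f x 1, derivable (derive1 f) x 1 &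
      {for x, continuous (derive1n 2 f)}].

Let f_derivable x : 0 < x -> derivable f x 1.
Proof. by case/f_C2. Qed.

Lemma derive1_ge0 a : 0 < a -> 0 <= derive1 f a.
Proof.
move=> a_gt0; apply: (@incr_derive1_ge0_itvy _ _ false 0).
- by move=> x; rewrite inE /= in_itv /= andbT; exact: f_derivable.
- by move=> x y; rewrite !in_itv /= !andbT => x_gt0 _; exact: f_incr.
- by rewrite in_itv /= a_gt0.
Qed.

Lemma concave_tangent_le x a : 0 < x -> x < a ->
  (a - x) * derive1 f a <= f a - f x.
Proof.
move=> x_gt0 xa; have ax_gt0 : 0 < a - x by lra.
have dq := derive1_cvg_at_left (f_derivable (lt_trans x_gt0 xa)).
rewrite mulrC -ler_pdivlMr //; apply: (cvgr_to_le dq).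
near=> h.
have h_lt0 : h < 0 by near: h; exact: nbhs_left_lt.
have xa_h : x - a < h by near: h; apply: nbhs_left_gt; lra.
(* [h + a] is the convex combination of [x] and [a] with weight [t] on [x] *)
pose t := - h / (a - x).
have t01 : 0 <= t <= 1.
  by apply/andP; split; [apply: divr_ge0 | rewrite ler_pdivrMr]; lra.
have := f_concave x_gt0 (lt_trans x_gt0 xa) t01.
have -> : t * x + (1 - t) * a = h + a by rewrite /t; field; lra.
move=> chord.
have -> : (f a - f x) / (a - x) = h^-1 * (t * (f x - f a)).
  by rewrite /t; field; lra.
by apply: ler_wnM2l; [rewrite invr_le0 ltW | lra].
Unshelve. all: by end_near. Qed.

Lemma integral_derive2 b c : 0 < b -> b < c ->
  (\int[lebesgue_measure]_(v in `[b, c]) (derive1n 2 f v)%:E =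
    (derive1 f c - derive1 f b)%:E)%E.
Proof.
move=> b_gt0 bc.
have f'_cont x : 0 < x -> {for x, continuous (derive1 f)}.
  by case/f_C2 => _ df' _; apply/differentiable_continuous/derivable1_diffP.
rewrite EFinB; apply: continuous_FTC2 => //.
- apply: continuous_in_subspaceT => x; rewrite inE /= in_itv /= => /andP[bx _].
  by case: (f_C2 (lt_le_trans b_gt0 bx)).
- split.
  + move=> x; rewrite in_itv /= => /andP[bx _].
    by case: (f_C2 (lt_trans b_gt0 bx)).
  + exact/cvg_at_right_filter/f'_cont.
  + exact/cvg_at_left_filter/f'_cont/(lt_trans b_gt0 bc).
Qed.

(* [f'(b) > f'(c) + C >= C]; then the tangent at [b] and [f b < f c]. *)
Lemma le_sub_of_integral_derive2_lt x b c C : 0 < x -> x < b -> b < c ->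
  (\int[lebesgue_measure]_(v in `[b, c]) (derive1n 2 f v)%:E < (- C)%:E)%E ->
  f x <= f c - (b - x) * C.
Proof.
move=> x_gt0 xb bc; have b_gt0 : 0 < b by lra.
rewrite integral_derive2 // lte_fin => f'_jump.
have f'c_ge0 := derive1_ge0 (lt_trans b_gt0 bc).
have tangent := concave_tangent_le x_gt0 xb.
have fbc := f_incr b_gt0 bc.
have : (b - x) * C <= (b - x) * derive1 f b by apply: ler_wpM2l; lra.
lra.
Qed.

End concave_increasing_C2.

End real_functions.

Section completed_probability.
Context {R : realType} d (X : measurableType d) (P : probability X R).
Local Open Scope ereal_scope.

Lemma univ_meas_funR_measurable (f : X -> R) : univ_meas_funR f ->
  measurable_fun [set: caratheodory_type (P^*)%mu] f.
Proof. by move=> mf _ B mB; rewrite setTI; exact: mf. Qed.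

Lemma Pc_le1 (A : set X) : Pc P A <= 1.
Proof.
apply: (@le_trans _ _ (Pc P setT)); first exact: le_mu_ext.
rewrite /Pc /= /completed_measure_extension measurable_mu_extE //.
exact: probability_le1.
Qed.

Lemma Pc_le_setI_setC (A B : set X) : Pc P A <= Pc P (A `&` B) + Pc P (~` B).
Proof.
apply: le_trans (outer_measureU2 (P^*)%mu _ _).
by apply: le_mu_ext => w Aw; have [Bw|nBw] := pselect (B w); [left | right].
Qed.

Lemma Pc_markov (f : X -> R) (a K : R) :
  measurable_fun [set: caratheodory_type (P^*)%mu] f -> (0 < a)%R ->
  Exp P (fun w => (`|f w| `^ 1)%:E) <= K%:E ->
  Pc P [set w | (a <= `|f w|)%R] <= (K / a)%:E.
Proof.
move=> /measurable_EFinP mf a_gt0 ExpK.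
rewrite EFinM lee_pdivlMr // muleC; apply: le_trans ExpK.
have := le_integral_comp_abse (Pc P) measurableT (a := a) (@measurable_id _ _ setT)
  (fun r r0 => r0) (fun x y _ _ xy => xy) mf a_gt0.
rewrite setTI /Exp; under [in X in _ -> X]eq_integral do rewrite powRr1 //.
by under eq_set do rewrite /= lee_fin.
Qed.

Lemma Pc_setI_lt_markov (f : X -> R) (K e : R) : univ_meas_funR f ->
  (0 < K)%R -> (0 < e)%R ->
  Exp P (fun w => (`|Num.max (f w) 0| `^ 1)%:E) <= K%:E ->
  forall A : set X, Pc P A - e%:E <= Pc P (A `&` [set w | (f w < K / e)%R]).
Proof.
move=> /univ_meas_funR_measurable mf K_gt0 e_gt0 ExpK A.
have a_gt0 : (0 < K / e)%R by apply: divr_gt0.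
have f_large : Pc P (~` [set w | (f w < K / e)%R]) <= e%:E.
  have := Pc_markov (measurable_maxr mf (measurable_cst _)) a_gt0 ExpK.
  rewrite (_ : (K / (K / e))%R = e); last by field; rewrite !gt_eqF.
  apply: le_trans; apply: le_mu_ext => w /= /negP; rewrite -leNgt => af.
  by rewrite (le_trans af) // (le_trans _ (ler_norm _)) // le_max lexx.
rewrite leeBlDr //; apply: le_trans (Pc_le_setI_setC _ _) _; exact: leeD.
Qed.

End completed_probability.

Lemma Exp_le_rnorm1 {R : realType} d (X : measurableType d)
    (Q : set (probability X R)) (P : probability X R) (f : X -> R) : Q P ->
  (Exp P (fun w => (`|f w| `^ 1)%:E) <= rnorm Q 1 f)%E.
Proof.
move=> QP.
have Exp_le_sup : (Exp P (fun w => (`|f w| `^ 1)%:E) <=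
    ereal_sup [set Exp P' (fun w => (`|f w| `^ 1)%:E) | P' in Q])%E.
  by apply: ereal_sup_ubound; exists P.
rewrite /rnorm invr1 poweRe1 //; apply: le_trans Exp_le_sup.
by apply: integral_ge0 => w _; rewrite lee_fin powR_ge0.
Qed.

Lemma Uext_le {R : realType} d (X : measurableType d) (U : X -> R -> R) w x y :
  (forall x y, 0 < x -> x < y -> U w x < U w y) -> x < y -> 0 < y ->
  (Uext U w x <= (U w y)%:E)%E.
Proof.
move=> U_incr xy y_gt0; rewrite /Uext.
have [x_gt0|x_le0] := ltP 0 x; first by rewrite lee_fin ltW // U_incr.
case: eqP => [_|]; last by rewrite leNye.
have U_nd : {in `]0, +oo[ &, nondecreasing_fun (fun v => (U w v)%:E)}.
  move=> u v; rewrite !in_itv /= !andbT => u_gt0 _.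
  by rewrite le_eqVlt => /predU1P[-> //|uv]; rewrite lee_fin ltW // U_incr.
rewrite (cvg_lim _ (nondecreasing_at_right_cvge _ _ U_nd)) //.
by apply: ereal_inf_lbound; exists y => //=; rewrite in_itv /= y_gt0.
Qed.

Lemma Uext_le_sub_of_integral_derive2_lt {R : realType} d (X : measurableType d)
    (U : X -> R -> R) w x x0 eps C :
  random_utility U -> 0 <= x -> x < x0 - eps -> 0 < eps ->
  (\int[lebesgue_measure]_(v in `[(x0 - eps / 2)%R, x0])
      (derive1n 2 (U w) v)%:E < (- C / eps)%:E)%E ->
  (Uext U w x <= (U w x0 - C / 2)%:E)%E.
Proof.
move=> [_ /(_ w)[U_concave U_incr U_C2]] x_ge0 x_lt eps_gt0.
rewrite mulNr => curvature.
have x'_gt0 : 0 < x0 - eps by lra.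
have x'_lt_b : x0 - eps < x0 - eps / 2 by lra.
have b_lt_x0 : x0 - eps / 2 < x0 by lra.
apply: le_trans (Uext_le U_incr x_lt x'_gt0) _; rewrite lee_fin.
have := le_sub_of_integral_derive2_lt U_concave U_incr U_C2 x'_gt0 x'_lt_b b_lt_x0
  curvature.
by rewrite (_ : _ * (C / eps) = C / 2) //; field; rewrite gt_eqF.
Qed.

Section ereal_limits.
Context {R : realType}.
Local Open Scope ereal_scope.

Lemma ereal_infB_le T (Q : set T) (f g : T -> \bar R) (e : R) :
  (forall P, Q P -> f P - e%:E <= g P) ->
  ereal_inf (f @` Q) - e%:E <= ereal_inf (g @` Q).
Proof.
move=> fg; apply/ereal_infP => _ [P QP <-]; apply: le_trans (fg P QP).
by apply: leeB => //; apply: ereal_inf_lbound; exists P.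
Qed.

Lemma cvg_1_of_approx_below (u : nat -> \bar R) : (forall n, u n <= 1) ->
  (forall e : R, (0 < e)%R ->
     exists2 v : nat -> \bar R, v @ \oo --> 1 & forall n, v n - e%:E <= u n) ->
  u @ \oo --> 1.
Proof.
move=> u_le1 approx.
have approx_fin (e : R) : (0 < e)%R -> \forall n \near \oo,
    u n \is a fin_num /\ (`|1 - fine (u n)| < e + e)%R.
  move=> e_gt0; have [v /fine_cvgP[v_fin /cvgrPdist_lt v_cvg] vu] := approx e e_gt0.
  apply: filterS2 v_fin (v_cvg e e_gt0) => n v_fin_n v_near.
  have u_fin : u n \is a fin_num.
    rewrite fin_numE -ltNye -ltey; apply/andP; split.
    - by apply: lt_le_trans (vu n); rewrite -(fineK v_fin_n) -EFinB ltNye.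
    - exact: le_lt_trans (u_le1 n) (ltey _).
  split => //; move: (vu n) (u_le1 n).
  rewrite -(fineK v_fin_n) -(fineK u_fin) -EFinB !lee_fin => vu_n u_le1_n.
  have := le_lt_trans (ler_norm _) v_near; rewrite /= => v_close.
  by rewrite ger0_norm; lra.
apply/fine_cvgP; split; first by have := approx_fin 1%R ltr01; apply: filterS => n [].
apply/cvgrPdist_lt => e e_gt0.
have e2_gt0 : (0 < e / 2)%R by lra.
by have := approx_fin _ e2_gt0; apply: filterS => n [_]; rewrite -splitr.
Qed.

End ereal_limits.

Theorem lemma4p5 (R : realType)
  (* Polish spaces Omega_1, Omega_2, ... (Om t is Omega_{t+1}) *)
  (Om : nat -> completePseudoMetricType R)
  (Om_polish : forall t, hausdorff_space (Om t) /\ separable_space (Om t))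
  (T : nat) (T_ge1 : (1 <= T)%N)
  (* the random sets Q_1 and Q_{t+1} : Omega^t ->> P(Omega_{t+1}) *)
  (Q1 : set (probability (Borel (Om 0)) R))
  (Qs : forall t : nat, projT2 (Omt Om t) -> set (probability (Borel (Om t.+1)) R))
  (x0 : R) (x0_gt0 : 0 < x0)
  (U : nat -> projT2 (Omt Om T.-1) -> R -> R)
  (U_ru : forall n, random_utility (U n))
  (Up_bd : exists K : R, forall n,
     (rnorm (QT Q1 Qs T) 1 (fun w => (Num.max (U n w x0) 0)%R) <= K%:E)%E)
  (Um_bd : exists K : R, forall n,
     (rnorm (QT Q1 Qs T) 1 (fun w => (Num.max (- U n w x0) 0)%R) <= K%:E)%E)
  (U'_bd : exists q : R, 1 < q /\ exists K : R, forall n,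
     (rnorm (QT Q1 Qs T) q (fun w => derive1 (U n w) x0) <= K%:E)%E)
  (U''_hyp : forall eps C : R, 0 < eps < x0 -> 0 <= C ->
     (fun n => ereal_inf [set Pc P
        [set w | (\int[lebesgue_measure]_(v in `[(x0 - eps / 2)%R, x0])
                    (derive1n 2 (U n w) v)%:E < (- C / eps)%R%:E)%E]
        | P in QT Q1 Qs T]) @ \oo --> 1%E) :
  forall x M : R, 0 <= x < x0 -> 0 <= M ->
    (fun n => ereal_inf [set Pc P [set w | (Uext (U n) w x <= (- M)%R%:E)%E]
                        | P in QT Q1 Qs T]) @ \oo --> 1%E.
Proof.
move=> x M /andP[x_ge0 x_lt_x0] M_ge0.
pose eps := (x0 - x) / 2.
have eps_itv : 0 < eps < x0 by apply/andP; split; rewrite /eps; lra.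
have {Up_bd} [K K_gt0 ExpU_le] : exists2 K : R, 0 < K & forall n P,
    QT Q1 Qs T P -> (Exp P (fun w => (`|Num.max (U n w x0) 0| `^ 1)%:E) <= K%:E)%E.
  have [K UK] := Up_bd; exists (Num.max K 1); first by rewrite lt_max ltr01 orbT.
  move=> n P QP; apply: le_trans (Exp_le_rnorm1 _ QP) _.
  by apply: le_trans (UK n) _; rewrite lee_fin le_max lexx.
(* An empty [QT] would make every infimum [+oo], contradicting [U''_hyp]. *)
have [P0 QP0] : exists P0, QT Q1 Qs T P0.
  apply: contrapT => noQ; have /fine_cvgP[inf_fin _] := U''_hyp eps 0 eps_itv (lexx 0).
  have [n /=] := filter_ex inf_fin.
  rewrite (_ : [set _ | P in QT Q1 Qs T] = set0) ?ereal_inf0 //.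
  by apply/seteqP; split => // y [P QP _]; apply: noQ; exists P.
apply: cvg_1_of_approx_below.
  by move=> n; apply: le_trans (Pc_le1 P0 _); apply: ereal_inf_lbound; exists P0.
move=> e e_gt0; pose C := 2 * (K / e + M).
have Ke_gt0 : 0 < K / e by apply: divr_gt0.
eexists; first by apply: (U''_hyp _ C eps_itv); rewrite /C; lra.
move=> n; apply: ereal_infB_le => P QP.
apply: le_trans (Pc_setI_lt_markov ((U_ru n).1 _ x0_gt0) K_gt0 e_gt0 (ExpU_le n P QP) _) _.
apply: le_mu_ext => w [curvature /= U_x0_lt].
apply: le_trans (Uext_le_sub_of_integral_derive2_lt (U_ru n) x_ge0 _ _ curvature) _.
- by rewrite /eps; lra.
- by case/andP: eps_itv.
- by rewrite lee_fin /C; lra.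
Qed.
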